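(* Let $\varepsilon\in\{0,-1\}$, $\delta\in\{-1,0,1\}$ and $\phi_1,\phi_2,\phi_3\in\mathring I_\delta$. Then $$\mathcal{M}_{\varepsilon,\delta}(\phi_1,\phi_2,\phi_3)=\{(r_1,r_2,r_3)\in(J_{\varepsilon\delta})^3:\ (r_i,r_j)\in\mathcal{D}_{\varepsilon,\delta}(\phi_k)\text{ for all }\{i,j,k\}=\{1,2,3\}\}.$$
   Context: Generalized hyperbolic triangles (in $\mathbb{H}^2$) are convex regions bounded by three geodesics $L_1,L_2,L_3$ (forming a Euclidean triangle in the Klein model) truncated by common perpendiculars at vertices outside $\overline{\mathbb{H}^2}$, with horodisks at ideal vertices; a generalized vertex has type $1$ (in $\mathbb{H}^2$), $0$ (ideal) or $-1$ (hyperideal). Generalized angle: interior angle (type 1), twice the horocyclic arc length between the sides (type 0), distance between the two sides (type $-1$). Generalized edge length between generalized vertices $u,v$: with $B_u$ the point, the horodisk, or the half-plane beyond the truncating perpendicular, it is $d(B_u,B_v)$ if these are disjoint and minus the distance between the points where $\partial B_u,\partial B_v$ meet the side otherwise. Type $(-1,-1,-1)$ triangles are right-angled hexagons, type $(0,0,0)$ are decorated ideal triangles. $\mathring I_\delta=\mathbb{R}_{>0}$ for $\delta\in\{0,-1\}$, $(0,\pi)$ for $\delta=1$; $J_\sigma=\mathbb{R}_{>0}$ for $\sigma=\pm1$, $J_0=\mathbb{R}$. For $\theta\in\mathring I_\delta$, $\mathcal{D}_{\varepsilon,\delta}(\theta)$ is the set of $(a,b)\in(J_{\varepsilon\delta})^2$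 such that there is a generalized triangle of type $(\varepsilon,\varepsilon,\delta)$ whose two sides at the type-$\delta$ vertex have lengths $a,b$ and whose generalized angle there is $\theta$. For $(r_i,r_j)\in\mathcal{D}_{\varepsilon,\delta}(\phi_k)$ let $l_k$ be the generalized length of the third side of this (unique up to isometry) triangle. Then $\mathcal{M}_{\varepsilon,\delta}(\phi_1,\phi_2,\phi_3)$ is the set of $(r_1,r_2,r_3)\in(J_{\varepsilon\delta})^3$ such that, for each $\{i,j,k\}=\{1,2,3\}$, $l_k$ is defined, and there exists a generalized triangle of type $(\varepsilon,\varepsilon,\varepsilon)$ with edge lengths $l_1,l_2,l_3$. *)

From Stdlib Require Import Reals ZArith.
Open Scope R_scope.

(** * Hyperboloid model of H^2 in Minkowski space R^{2,1}.
    The Klein model is the affine chart x3 = 1 of the same projective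
    picture: a vector v with c3 v > 0 corresponds to the Klein point
    (c1 v / c3 v, c2 v / c3 v). *)

Record V3 := mkV { c1 : R; c2 : R; c3 : R }.

Definition mink (u v : V3) : R := c1 u * c1 v + c2 u * c2 v - c3 u * c3 v.

Definition lin (a : R) (u : V3) (b : R) (v : V3) : V3 :=
  mkV (a * c1 u + b * c1 v) (a * c2 u + b * c2 v) (a * c3 u + b * c3 v).

Definition det3 (u v w : V3) : R :=
  c1 u * (c2 v * c3 w - c3 v * c2 w)
  - c2 u * (c1 v * c3 w - c3 v * c1 w)
  + c3 u * (c1 v * c2 w - c2 v * c1 w).

Definition H2 (x : V3) : Prop := mink x x = -1 /\ 0 < c3 x.

Definition arcosh (z : R) : R := ln (z + sqrt (z * z - 1)).

Definition hdist (x y : V3) : R := arcosh (- mink x y).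

Definition is_inf (P : R -> Prop) (m : R) : Prop :=
  (forall d, P d -> m <= d) /\ (forall m', (forall d, P d -> m' <= d) -> m' <= m).

Definition setdist (A B : V3 -> Prop) (d : R) : Prop :=
  is_inf (fun t => exists x y, A x /\ B y /\ t = hdist x y) d.

(** Types are integers 1, 0, -1.
    - type 1  : v is a point of H^2;
    - type 0  : v is a future light-like vector; it encodes the ideal point
                [v] together with the horodisk {x | -<x,v> <= 1} centred at it
                (this is a bijection with (ideal point, horodisk) pairs);
    - type -1 : v is a unit space-like vector with c3 v > 0, i.e. a (finite)
                Klein point outside the closed disk; its truncating geodesic
                (polar) is {x | <x,v> = 0}. *)
Definition gvertex (t : Z) (v : V3) : Prop :=
  match t with
  | Z0 => mink v v = 0 /\ 0 < c3 v
  | Zpos _ => H2 v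
  | Zneg _ => mink v v = 1 /\ 0 < c3 v
  end.

(** B_v : the point, the horodisk, or the closed half-plane beyond the
    truncating perpendicular (the side containing the hyperideal vertex). *)
Definition Bset (t : Z) (v : V3) (x : V3) : Prop :=
  match t with
  | Z0 => H2 x /\ - mink x v <= 1
  | Zpos _ => x = v
  | Zneg _ => H2 x /\ 0 <= mink x v
  end.

Definition Bbdry (t : Z) (v : V3) (x : V3) : Prop :=
  match t with
  | Z0 => H2 x /\ - mink x v = 1
  | Zpos _ => x = v
  | Zneg _ => H2 x /\ mink x v = 0
  end.

Definition geod (u v : V3) (x : V3) : Prop :=
  H2 x /\ exists a b, x = lin a u b v.

(** the part of H^2 cut away by the truncation at a hyperideal vertex *)
Definition cut (t : Z) (v : V3) (x : V3) : Prop :=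
  match t with
  | Zneg _ => 0 <= mink x v
  | _ => False
  end.

(** the side between vertices u, v of the Euclidean (Klein) triangle keeps a
    nonempty piece of H^2 after truncation *)
Definition side_ok (tu : Z) (u : V3) (tv : Z) (v : V3) : Prop :=
  exists a b, 0 <= a /\ 0 <= b /\
    H2 (lin a u b v) /\ ~ cut tu u (lin a u b v) /\ ~ cut tv v (lin a u b v).

(** generalized hyperbolic triangle of type (t1,t2,t3) with generalized
    vertices v1, v2, v3: the three Klein vertices form a nondegenerate
    Euclidean triangle, each side is a geodesic meeting the truncated region. *)
Definition gtri (t1 t2 t3 : Z) (v1 v2 v3 : V3) : Prop :=
  gvertex t1 v1 /\ gvertex t2 v2 /\ gvertex t3 v3 /\
  det3 v1 v2 v3 <> 0 /\
  side_ok t1 v1 t2 v2 /\ side_ok t2 v2 t3 v3 /\ side_ok t3 v3 t1 v1.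

Definition glen (tu : Z) (u : V3) (tv : Z) (v : V3) (l : R) : Prop :=
  ((forall x, ~ (Bset tu u x /\ Bset tv v x)) /\ setdist (Bset tu u) (Bset tv v) l)
  \/
  ((exists x, Bset tu u x /\ Bset tv v x) /\
   exists p q, Bbdry tu u p /\ geod u v p /\ Bbdry tv v q /\ geod u v q /\
               l = - hdist p q).

(** generalized angle at vertex w (type tw) between the sides towards u and v.
    - type 1: Riemannian angle between the tangent vectors at w of the sides;
    - type 0: twice the horocyclic arc length between the points p, q where the
      sides meet the horocycle; the horocycle through p is parametrised by
      arc length as s |-> p + s T + (s^2/2) w (T unit, T ⊥ p, T ⊥ w);
    - type -1: distance between the two sides. *)
Definition gangle (tw : Z) (w u v : V3) (theta : R) : Prop :=
  match tw with
  | Zpos _ =>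
      let Tu := lin 1 u (mink u w) w in
      let Tv := lin 1 v (mink v w) w in
      0 <= theta <= PI /\
      cos theta = mink Tu Tv / (sqrt (mink Tu Tu) * sqrt (mink Tv Tv))
  | Z0 =>
      exists p q T s,
        Bbdry 0 w p /\ geod w u p /\ Bbdry 0 w q /\ geod w v q /\
        mink T T = 1 /\ mink T p = 0 /\ mink T w = 0 /\
        q = lin 1 (lin 1 p s T) (s * s / 2) w /\
        theta = 2 * Rabs s
  | Zneg _ => setdist (geod w u) (geod w v) theta
  end.

Definition Iint (delta : Z) (theta : R) : Prop :=
  match delta with
  | Zpos _ => 0 < theta < PI
  | _ => 0 < theta
  end.

Definition J (sigma : Z) (x : R) : Prop :=
  match sigma with
  | Z0 => True
  | _ => 0 < x
  end.

(** a triangle of type (eps,eps,delta) (vertices v1, v2 of type eps, v3 of type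
    delta) with sides a = |v3 v1|, b = |v3 v2|, angle theta at v3 and
    third side l = |v1 v2| *)
Definition realizes (eps delta : Z) (theta a b l : R) : Prop :=
  exists v1 v2 v3, gtri eps eps delta v1 v2 v3 /\
    glen delta v3 eps v1 a /\ glen delta v3 eps v2 b /\
    gangle delta v3 v1 v2 theta /\ glen eps v1 eps v2 l.

Definition Dset (eps delta : Z) (theta a b : R) : Prop :=
  J (eps * delta) a /\ J (eps * delta) b /\
  exists v1 v2 v3, gtri eps eps delta v1 v2 v3 /\
    glen delta v3 eps v1 a /\ glen delta v3 eps v2 b /\
    gangle delta v3 v1 v2 theta.

(** M_{eps,delta}(phi1,phi2,phi3): l_k is the third side of the triangle
    determined by (r_i, r_j) in D(phi_k), for each ordering of {i,j,k};
    and a triangle of type (eps,eps,eps) with lengths l1,l2,l3 exists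
    (l_k is the length of the side opposite vertex k). *)
Definition Mset (eps delta : Z) (phi1 phi2 phi3 r1 r2 r3 : R) : Prop :=
  J (eps * delta) r1 /\ J (eps * delta) r2 /\ J (eps * delta) r3 /\
  exists l1 l2 l3,
    realizes eps delta phi1 r2 r3 l1 /\ realizes eps delta phi1 r3 r2 l1 /\
    realizes eps delta phi2 r3 r1 l2 /\ realizes eps delta phi2 r1 r3 l2 /\
    realizes eps delta phi3 r1 r2 l3 /\ realizes eps delta phi3 r2 r1 l3 /\
    exists w1 w2 w3, gtri eps eps eps w1 w2 w3 /\
      glen eps w2 eps w3 l1 /\ glen eps w3 eps w1 l2 /\ glen eps w1 eps w2 l3.

(** The inclusion M ⊆ {...} is immediate: a triangle realizing a third side l_k
    witnesses (r_i,r_j) ∈ D(φ_k).  For the converse, the key fact is that between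
    two generalized vertices u, v of type ε ∈ {0,-1} the generalized length is an
    explicit function of the Minkowski product: ln(-<u,v>/2) for decorated ideal
    vertices and arcosh(-<u,v>) for hyperideal ones ([glen_side_length]).  Hence a
    witness of (r_i,r_j) ∈ D(φ_k) determines a third side l_k, also realized after
    swapping the two type-ε vertices; and every triple (l1,l2,l3) (arbitrary for
    ε = 0, positive for ε = -1, as third sides are) is the side-length triple of an
    explicitly constructed decorated ideal triangle or right-angled hexagon. *)

From Stdlib Require Import Reals ZArith Lra Psatz.
Open Scope R_scope.

Lemma mink_sym u v : mink u v = mink v u.
Proof. destruct u, v; unfold mink; simpl; ring. Qed.

Lemma mink_linl a u b v w : mink (lin a u b v) w = a * mink u w + b * mink v w.
Proof. destruct u, v, w; unfold mink, lin; simpl; ring. Qed.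

Lemma mink_linr a u b v w : mink w (lin a u b v) = a * mink w u + b * mink w v.
Proof. destruct u, v, w; unfold mink, lin; simpl; ring. Qed.

Lemma c3_lin a u b v : c3 (lin a u b v) = a * c3 u + b * c3 v.
Proof. reflexivity. Qed.

Lemma lin_comm a u b v : lin a u b v = lin b v a u.
Proof. unfold lin; f_equal; ring. Qed.

Lemma exists_sqrt x : 0 < x -> exists k, 0 < k /\ k * k = x.
Proof. intro Hx. exists (sqrt x). split; [apply sqrt_lt_R0 | apply sqrt_sqrt]; lra. Qed.

Lemma sqrt_le_of_sq a b : 0 <= a -> 0 <= b -> a <= b * b -> sqrt a <= b.
Proof.
  intros Ha Hb H. rewrite <- (sqrt_square b Hb). apply sqrt_le_1_alt. exact H.
Qed.

Lemma future_timelike_neg a b :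
  mink a a < 0 -> mink b b < 0 -> 0 < c3 a -> 0 < c3 b -> mink a b < 0.
Proof.
  destruct a as [a1 a2 a3], b as [b1 b2 b3]; unfold mink; simpl; intros Ha Hb Pa Pb.
  assert (CS : (a1*b1 + a2*b2)^2 <= (a1*a1 + a2*a2) * (b1*b1 + b2*b2))
    by (pose proof (pow2_ge_0 (a1*b2 - a2*b1)); nra).
  assert (Lt : (a1*a1 + a2*a2) * (b1*b1 + b2*b2) < (a3*a3) * (b3*b3)).
  { apply Rle_lt_trans with ((a1*a1 + a2*a2) * (b3*b3)).
    - apply Rmult_le_compat_l; nra.
    - apply Rmult_lt_compat_r; nra. }
  assert (0 < a3*b3) by nra.
  destruct (Rlt_or_le (a1*b1 + a2*b2 - a3*b3) 0) as [|Ge]; [lra|].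
  assert ((a3*b3)^2 <= (a1*b1 + a2*b2)^2) by (apply pow_incr; lra).
  nra.
Qed.

Lemma reverse_cauchy_schwarz a b : mink b b < 0 -> mink a a * mink b b <= (mink a b)^2.
Proof.
  intro Hb.
  assert (Hc : c3 b <> 0).
  { intro E. destruct b as [b1 b2 b3]; unfold mink in Hb; simpl in *; subst; nra. }
  set (t := - c3 a / c3 b).
  set (w := lin 1 a t b).
  assert (Hw : 0 <= mink w w).
  { assert (c3 w = 0) by (unfold w; rewrite c3_lin; unfold t; field; auto).
    destruct w as [w1 w2 w3]; unfold mink; simpl in *; subst; nra. }
  unfold w in Hw; rewrite mink_linl, !mink_linr, (mink_sym b a) in Hw.
  pose proof (pow2_ge_0 (mink a b + t * mink b b)).
  nra.
Qed.

Lemma future_of_neg_product a b :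
  mink a a < 0 -> mink b b < 0 -> 0 < c3 b -> mink a b < 0 -> 0 < c3 a.
Proof.
  intros Ha Hb Pb Hab.
  destruct (Rtotal_order (c3 a) 0) as [Neg|[Zero|Pos]]; auto.
  - assert (N : mink (lin (-1) a 0 a) b < 0).
    { apply future_timelike_neg; auto.
      - rewrite mink_linl, !mink_linr. nra.
      - rewrite c3_lin; lra. }
    rewrite mink_linl in N. lra.
  - destruct a as [a1 a2 a3]; unfold mink in Ha; simpl in *; subst; nra.
Qed.

(** Let [e] be future timelike and [f] spacelike, orthonormal, and X = <x,f>.
    Removing the [f]-component of a point x of H^2 leaves a future timelike
    vector of norm -(1 + X^2), so reverse Cauchy-Schwarz gives
    -<x,e> >= sqrt(1 + X^2) and -<x,y> >= sqrt(1 + X^2) sqrt(1 + Y^2) - X Y. *)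
Lemma frame_bounds e f x y :
  mink e e = -1 -> mink f f = 1 -> mink e f = 0 -> 0 < c3 e -> H2 x -> H2 y ->
  sqrt (1 + (mink x f)^2) <= - mink x e /\
  sqrt (1 + (mink x f)^2) * sqrt (1 + (mink y f)^2) - mink x f * mink y f <= - mink x y.
Proof.
  intros Hee Hff Hef He [Hx Px] [Hy Py].
  set (X := mink x f). set (Y := mink y f).
  set (x' := lin 1 x (-X) f). set (y' := lin 1 y (-Y) f).
  assert (Hx'x' : mink x' x' = -1 - X^2).
  { unfold x'; rewrite mink_linl, !mink_linr, (mink_sym f x); fold X. rewrite Hx, Hff. ring. }
  assert (Hy'y' : mink y' y' = -1 - Y^2).
  { unfold y'; rewrite mink_linl, !mink_linr, (mink_sym f y); fold Y. rewrite Hy, Hff. ring. }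
  assert (Hx'e : mink x' e = mink x e) by (unfold x'; rewrite mink_linl, (mink_sym f e), Hef; ring).
  assert (Hy'e : mink y' e = mink y e) by (unfold y'; rewrite mink_linl, (mink_sym f e), Hef; ring).
  assert (Hx'y' : mink x' y' = mink x y - X * Y).
  { unfold x', y'; rewrite mink_linl, !mink_linr, (mink_sym f y); fold X Y. rewrite Hff. ring. }
  assert (Hxe : mink x e < 0) by (apply future_timelike_neg; lra).
  assert (Hye : mink y e < 0) by (apply future_timelike_neg; lra).
  assert (Px' : 0 < c3 x') by (apply (future_of_neg_product x' e); nra).
  assert (Py' : 0 < c3 y') by (apply (future_of_neg_product y' e); nra).
  assert (Nxy : mink x' y' < 0) by (apply future_timelike_neg; nra).
  split.
  - pose proof (reverse_cauchy_schwarz x' e ltac:(lra)) as RCS.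
    rewrite Hx'x', Hee, Hx'e in RCS.
    apply sqrt_le_of_sq; nra.
  - pose proof (reverse_cauchy_schwarz x' y' ltac:(nra)) as RCS.
    rewrite Hx'x', Hy'y', Hx'y' in RCS.
    rewrite <- sqrt_mult by nra.
    assert (sqrt ((1 + X^2) * (1 + Y^2)) <= - (mink x y - X * Y)) by (apply sqrt_le_of_sq; nra).
    lra.
Qed.

(** The bisector frame of two vertices [u], [v] with <u,u> = <v,v> = s:
    e = (u+v)/k1 is a point of H^2 (the midpoint of the side) and
    f = (u-v)/k2 is a unit spacelike vector orthogonal to it. *)
Section BisectorFrame.
Variables (u v : V3) (s k1 k2 : R).
Hypotheses (Hu : mink u u = s) (Hv : mink v v = s) (Pu : 0 < c3 u) (Pv : 0 < c3 v).
Hypotheses (k1p : 0 < k1) (K1 : k1 * k1 = -2 * (s + mink u v)).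
Hypotheses (k2p : 0 < k2) (K2 : k2 * k2 = 2 * (s - mink u v)).

Let e := lin (/k1) u (/k1) v.
Let f := lin (/k2) u (- /k2) v.
Let Hvu : mink v u = mink u v := mink_sym v u.

Lemma bisector_H2 : H2 e.
Proof.
  split.
  - unfold e; rewrite mink_linl, !mink_linr, Hu, Hv, Hvu.
    replace (/ k1 * (/ k1 * s + / k1 * mink u v) + / k1 * (/ k1 * mink u v + / k1 * s))
      with (2 * (s + mink u v) / (k1 * k1)) by (field; lra).
    rewrite K1. field. nra.
  - unfold e; rewrite c3_lin. assert (0 < /k1) by (apply Rinv_0_lt_compat; lra). nra.
Qed.

Lemma bisector_normal_unit : mink f f = 1.
Proof.
  unfold f; rewrite mink_linl, !mink_linr, Hu, Hv, Hvu.
  replace (/ k2 * (/ k2 * s + - / k2 * mink u v) + - / k2 * (/ k2 * mink u v + - / k2 * s))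
    with (2 * (s - mink u v) / (k2 * k2)) by (field; lra).
  rewrite K2. field. nra.
Qed.

Lemma bisector_normal_orth : mink e f = 0.
Proof. unfold e, f; rewrite mink_linl, !mink_linr, Hu, Hv, Hvu. field. split; lra. Qed.

Lemma bisector_coords x :
  mink x u = (k1 * mink x e + k2 * mink x f) / 2 /\
  mink x v = (k1 * mink x e - k2 * mink x f) / 2.
Proof. unfold e, f; rewrite !mink_linr. split; field; split; lra. Qed.

End BisectorFrame.

(** Real-variable core of [halfplane_bound], in bisector-frame coordinates. *)
Lemma halfplane_core k1 k2 A B X Y :
  0 < k1 -> 0 < k2 -> k2 * k2 = k1 * k1 + 4 -> 0 <= A -> 0 <= B ->
  A * A = 1 + X * X -> B * B = 1 + Y * Y -> k1 * A <= k2 * X -> k1 * B <= - (k2 * Y) ->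
  (k1 * k1 + k2 * k2) / 4 <= A * B - X * Y.
Proof.
  intros k1p k2p K A0 B0 HA HB SX SY.
  assert (0 <= k1 * A) by (apply Rmult_le_pos; lra).
  assert (0 <= k1 * B) by (apply Rmult_le_pos; lra).
  assert (SX2 : (k1 * A) * (k1 * A) <= (k2 * X) * (k2 * X)) by (apply Rmult_le_compat; lra).
  assert (SY2 : (k1 * B) * (k1 * B) <= (- (k2 * Y)) * (- (k2 * Y)))
    by (apply Rmult_le_compat; lra).
  assert (X0 : 0 <= X) by nra.
  assert (Y0 : Y <= 0) by nra.
  assert (Xb : k1 / 2 <= X) by nra.
  assert (Yb : k1 / 2 <= - Y) by nra.
  assert (Ab : k2 / 2 <= A) by nra.
  assert (Bb : k2 / 2 <= B) by nra.
  assert (k2 / 2 * (k2 / 2) <= A * B) by (apply Rmult_le_compat; lra).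
  assert (k1 / 2 * (k1 / 2) <= X * - Y) by (apply Rmult_le_compat; lra).
  nra.
Qed.

Lemma halfplane_bound u v x y :
  mink u u = 1 -> mink v v = 1 -> 0 < c3 u -> 0 < c3 v -> mink u v < -1 ->
  H2 x -> H2 y -> 0 <= mink x u -> 0 <= mink y v -> - mink u v <= - mink x y.
Proof.
  intros Hu Hv Pu Pv Hm Hx Hy Hxu Hyv.
  destruct (exists_sqrt (-2 * (1 + mink u v))) as [k1 [k1p K1]]; [lra|].
  destruct (exists_sqrt (2 * (1 - mink u v))) as [k2 [k2p K2]]; [lra|].
  set (e := lin (/k1) u (/k1) v). set (f := lin (/k2) u (- /k2) v).
  destruct (bisector_H2 u v 1 k1 Hu Hv Pu Pv k1p K1) as [Hee Pe].
  pose proof (bisector_normal_unit u v 1 k2 Hu Hv k2p K2) as Hff.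
  pose proof (bisector_normal_orth u v 1 k1 k2 Hu Hv k1p k2p) as Hef.
  destruct (frame_bounds e f x y Hee Hff Hef Pe Hx Hy) as [Ix Ixy].
  destruct (frame_bounds e f y x Hee Hff Hef Pe Hy Hx) as [Iy _].
  destruct (bisector_coords u v k1 k2 k1p k2p x) as [Cxu _].
  destruct (bisector_coords u v k1 k2 k1p k2p y) as [_ Cyv].
  fold e f in Cxu, Cyv.
  assert (Target : - mink u v = (k1 * k1 + k2 * k2) / 4) by lra.
  rewrite Target.
  apply Rle_trans with (sqrt (1 + (mink x f)^2) * sqrt (1 + (mink y f)^2) - mink x f * mink y f);
    [|exact Ixy].
  assert (Sx : k1 * sqrt (1 + (mink x f)^2) <= k1 * - mink x e) by (apply Rmult_le_compat_l; lra).
  assert (Sy : k1 * sqrt (1 + (mink y f)^2) <= k1 * - mink y e) by (apply Rmult_le_compat_l; lra).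
  apply halfplane_core; try apply sqrt_pos; try (rewrite sqrt_sqrt; nra); lra.
Qed.

(** Real-variable core of [horodisk_bound]; the substitution R = (A+X)(B-Y)
    turns -<x,y> into (R + 1/R)/2, which is increasing for R >= 1. *)
Lemma horodisk_core k A B X Y :
  4 < k * k -> 0 < k -> 0 <= A -> 0 <= B -> A * A = 1 + X * X -> B * B = 1 + Y * Y ->
  k * (A - X) <= 2 -> k * (B + Y) <= 2 ->
  k * k / 8 + 2 / (k * k) <= A * B - X * Y.
Proof.
  intros Kb kp A0 B0 HA HB SX SY.
  assert (AX : X < A /\ - X < A) by (split; nra).
  assert (BY : Y < B /\ - Y < B) by (split; nra).
  set (P := A + X). set (Q := B - Y).
  assert (PP : P * (A - X) = 1) by (unfold P; nra).
  assert (QQ : Q * (B + Y) = 1) by (unfold Q; nra).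
  assert (Pb : k <= 2 * P) by (unfold P in *; nra).
  assert (Qb : k <= 2 * Q) by (unfold Q in *; nra).
  set (R := P * Q).
  assert (Rp : 0 < R) by (unfold R, P, Q; nra).
  assert (HEq : A * B - X * Y = (R + / R) / 2).
  { assert (RR : R * ((A - X) * (B + Y)) = 1) by (unfold R; nra).
    replace (/ R) with ((A - X) * (B + Y))
      by (rewrite <- (Rmult_1_l (/ R)), <- RR; field; lra).
    unfold R, P, Q. field. }
  assert (Rb : k * k / 4 <= R) by (unfold R; nra).
  rewrite HEq.
  assert (F : 0 <= (4 * R - k * k) * (R * (k * k) - 4)) by (apply Rmult_le_pos; nra).
  apply (Rmult_le_reg_l (8 * R * (k * k))); [nra|].
  field_simplify; [|lra|lra].
  nra.
Qed.

Lemma horodisk_bound u v x y :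
  mink u u = 0 -> mink v v = 0 -> 0 < c3 u -> 0 < c3 v -> mink u v < -2 ->
  H2 x -> H2 y -> - mink x u <= 1 -> - mink y v <= 1 ->
  - mink u v / 4 + / (- mink u v) <= - mink x y.
Proof.
  intros Hu Hv Pu Pv Hm Hx Hy Hxu Hyv.
  destruct (exists_sqrt (-2 * (0 + mink u v))) as [k [kp K]]; [lra|].
  assert (K' : k * k = 2 * (0 - mink u v)) by lra.
  set (e := lin (/k) u (/k) v). set (f := lin (/k) u (- /k) v).
  destruct (bisector_H2 u v 0 k Hu Hv Pu Pv kp K) as [Hee Pe].
  pose proof (bisector_normal_unit u v 0 k Hu Hv kp K') as Hff.
  pose proof (bisector_normal_orth u v 0 k k Hu Hv kp kp) as Hef.
  destruct (frame_bounds e f x y Hee Hff Hef Pe Hx Hy) as [Ix Ixy].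
  destruct (frame_bounds e f y x Hee Hff Hef Pe Hy Hx) as [Iy _].
  destruct (bisector_coords u v k k kp kp x) as [Cxu _].
  destruct (bisector_coords u v k k kp kp y) as [_ Cyv].
  fold e f in Cxu, Cyv.
  assert (Target : - mink u v / 4 + / (- mink u v) = k * k / 8 + 2 / (k * k))
    by (rewrite K; field; lra).
  rewrite Target.
  apply Rle_trans with (sqrt (1 + (mink x f)^2) * sqrt (1 + (mink y f)^2) - mink x f * mink y f);
    [|exact Ixy].
  assert (Sx : k * sqrt (1 + (mink x f)^2) <= k * - mink x e) by (apply Rmult_le_compat_l; lra).
  assert (Sy : k * sqrt (1 + (mink y f)^2) <= k * - mink y e) by (apply Rmult_le_compat_l; lra).
  apply horodisk_core; try apply sqrt_pos; try (rewrite sqrt_sqrt; nra); lra.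
Qed.

Lemma cosh_ln t : 0 < t -> cosh (ln t) = (t + / t) / 2.
Proof. intro Ht. unfold cosh. rewrite exp_Ropp, exp_ln by exact Ht. reflexivity. Qed.

Lemma arcosh_cosh l : arcosh (cosh l) = Rabs l.
Proof.
  unfold arcosh.
  replace (cosh l * cosh l - 1) with (Rsqr (sinh l))
    by (unfold Rsqr, cosh, sinh; rewrite exp_Ropp; field; apply Rgt_not_eq, exp_pos).
  rewrite sqrt_Rsqr_abs.
  destruct (Rle_or_lt 0 l) as [Pos|Neg].
  - assert (0 <= sinh l).
    { rewrite <- sinh_0. destruct Pos as [P | <-]; [left; now apply sinh_lt | now right]. }
    rewrite !Rabs_right by lra.
    replace (cosh l + sinh l) with (exp l) by (unfold cosh, sinh; field).
    apply ln_exp.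
  - assert (sinh l < 0) by (rewrite <- sinh_0; now apply sinh_lt).
    rewrite Rabs_left, Rabs_left by lra.
    replace (cosh l + - sinh l) with (exp (- l)) by (unfold cosh, sinh; field).
    apply ln_exp.
Qed.

Lemma arcosh_mono a b : 1 <= a -> a <= b -> arcosh a <= arcosh b.
Proof.
  intros Ha Hab. unfold arcosh.
  assert (sqrt (a * a - 1) <= sqrt (b * b - 1)) by (apply sqrt_le_1_alt; nra).
  pose proof (sqrt_pos (a * a - 1)).
  destruct (Req_dec (a + sqrt (a * a - 1)) (b + sqrt (b * b - 1))) as [E|N].
  - rewrite E; lra.
  - left. apply ln_increasing; lra.
Qed.

Lemma arcosh_pos z : 1 < z -> 0 < arcosh z.
Proof.
  intro Hz. unfold arcosh. rewrite <- ln_1. apply ln_increasing; [lra|].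
  pose proof (sqrt_pos (z * z - 1)). lra.
Qed.

Lemma setdist_attained (A B : V3 -> Prop) d :
  (forall x y, A x -> B y -> d <= hdist x y) ->
  (exists p q, A p /\ B q /\ hdist p q = d) -> setdist A B d.
Proof.
  intros Low [p [q [Ap [Bq Hpq]]]]. split.
  - intros t [x [y [Ax [By ->]]]]. now apply Low.
  - intros m' Hm. apply Hm. exists p, q. auto.
Qed.

(** Feet of the common perpendicular of the polars of two hyperideal vertices:
    points on the boundary lines realizing the product <u,v>. *)
Lemma hyperideal_feet u v : gvertex (-1) u -> gvertex (-1) v -> mink u v < -1 ->
  exists p q, Bset (-1) u p /\ Bset (-1) v q /\ mink p q = mink u v.
Proof.
  simpl. intros [Hu Pu] [Hv Pv] Hm.
  set (m := mink u v) in *.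
  destruct (exists_sqrt (m * m - 1)) as [S [Sp SS]]; [nra|].
  set (b := / S).
  assert (bp : 0 < b) by (apply Rinv_0_lt_compat; lra).
  assert (Hb : b * b * (m * m - 1) = 1) by (unfold b; rewrite <- SS; field; lra).
  assert (Hvu : mink v u = m) by (unfold m; apply mink_sym).
  assert (0 < - b * m) by nra.
  exists (lin b v (- b * m) u), (lin b u (- b * m) v).
  repeat split.
  - rewrite mink_linl, !mink_linr, Hu, Hv, Hvu; fold m. nra.
  - rewrite c3_lin. apply Rplus_lt_0_compat; apply Rmult_lt_0_compat; lra.
  - rewrite mink_linl, Hu, Hvu. nra.
  - rewrite mink_linl, !mink_linr, Hu, Hv, Hvu; fold m. nra.
  - rewrite c3_lin. apply Rplus_lt_0_compat; apply Rmult_lt_0_compat; lra.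
  - rewrite mink_linl, Hv. fold m. nra.
  - rewrite mink_linl, !mink_linr, Hu, Hv, Hvu; fold m. nra.
Qed.

Lemma glen_hyperideal u v : gvertex (-1) u -> gvertex (-1) v -> mink u v < -1 ->
  glen (-1) u (-1) v (arcosh (- mink u v)).
Proof.
  intros Gu Gv Hm. pose proof Gu as [Hu Pu]. pose proof Gv as [Hv Pv].
  left. split.
  - intros x [[Hx Hxu] [_ Hxv]].
    pose proof (halfplane_bound u v x x Hu Hv Pu Pv Hm Hx Hx Hxu Hxv). destruct Hx. lra.
  - apply setdist_attained.
    + intros x y [Hx Hxu] [Hy Hyv]. unfold hdist.
      apply arcosh_mono; [lra|]. now apply halfplane_bound.
    + destruct (hyperideal_feet u v Gu Gv Hm) as [p [q [Bp [Bq Hpq]]]].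
      exists p, q. unfold hdist. rewrite Hpq. auto.
Qed.

Lemma horocycle_feet u v : gvertex 0 u -> gvertex 0 v -> mink u v < 0 ->
  exists p q, Bbdry 0 u p /\ geod u v p /\ Bbdry 0 v q /\ geod u v q /\
    - mink p v = - mink u v / 2 /\ - mink p q = - mink u v / 4 + / (- mink u v).
Proof.
  simpl. intros [Hu Pu] [Hv Pv] Hm.
  set (c := - mink u v) in *.
  assert (Hc : 0 < c) by (unfold c; lra).
  assert (ic : 0 < / c) by (apply Rinv_0_lt_compat; lra).
  assert (Huv : mink u v = - c) by (unfold c; ring).
  assert (Hvu : mink v u = - c) by (rewrite mink_sym; exact Huv).
  assert (Hpp : H2 (lin (1/2) u (/c) v)).
  { split; [rewrite mink_linl, !mink_linr, Hu, Hv, Hvu, Huv; field; lra | rewrite c3_lin; nra]. }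
  assert (Hqq : H2 (lin (/c) u (1/2) v)).
  { split; [rewrite mink_linl, !mink_linr, Hu, Hv, Hvu, Huv; field; lra | rewrite c3_lin; nra]. }
  exists (lin (1/2) u (/c) v), (lin (/c) u (1/2) v).
  repeat split; try apply Hpp; try apply Hqq.
  - rewrite mink_linl, Hu, Hvu. field. lra.
  - exists (1/2), (/c). reflexivity.
  - rewrite mink_linl, Hv, Huv. field. lra.
  - exists (/c), (1/2). reflexivity.
  - rewrite mink_linl, Hv, Huv. field. lra.
  - rewrite mink_linl, !mink_linr, Hu, Hv, Hvu, Huv. field. lra.
Qed.

(** For
    -<u,v> > 2 the horodisks are disjoint and this is their distance; otherwise
    they overlap and it is minus the distance between the feet on the side. *)
Lemma glen_ideal u v : gvertex 0 u -> gvertex 0 v -> mink u v < 0 ->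
  glen 0 u 0 v (ln (- mink u v / 2)).
Proof.
  intros Gu Gv Hm. pose proof Gu as [Hu Pu]. pose proof Gv as [Hv Pv].
  set (c := - mink u v) in *.
  destruct (horocycle_feet u v Gu Gv Hm) as [p [q [Bp [Lp [Bq [Lq [Hpv Hpq]]]]]]].
  fold c in Hpv, Hpq.
  assert (Ec : mink u v = - c) by (unfold c; ring).
  assert (Hc : 0 < c) by lra.
  assert (Cosh : c / 4 + / c = cosh (ln (c / 2))) by (rewrite cosh_ln by lra; field; lra).
  assert (Dpq : hdist p q = Rabs (ln (c / 2)))
    by (unfold hdist; rewrite Hpq, Cosh; apply arcosh_cosh).
  destruct (Rlt_or_le 2 c) as [Far|Near].
  - assert (Pos : 0 <= ln (c / 2)) by (rewrite <- ln_1; left; apply ln_increasing; lra).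
    assert (Far1 : 1 < c / 4 + / c).
    { apply (Rmult_lt_reg_l c); [lra|].
      replace (c * (c / 4 + / c)) with (c * c / 4 + 1) by (field; lra). nra. }
    left. split.
    + intros x [[Hx Hxu] [_ Hxv]].
      pose proof (horodisk_bound u v x x Hu Hv Pu Pv ltac:(lra) Hx Hx Hxu Hxv) as Low.
      rewrite Ec, Ropp_involutive in Low. destruct Hx. lra.
    + apply setdist_attained.
      * intros x y [Hx Hxu] [Hy Hyv]. rewrite <- (Rabs_right (ln (c / 2))), <- arcosh_cosh,
          <- Cosh by lra.
        unfold hdist. apply arcosh_mono; [lra|]. apply horodisk_bound; auto; lra.
      * destruct Bp as [Hp Hpu], Bq as [Hq Hqv].
        exists p, q. split; [split; [exact Hp | lra]|]. split; [split; [exact Hq | lra]|].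
        rewrite Dpq. apply Rabs_right. lra.
  - assert (Neg : ln (c / 2) <= 0).
    { rewrite <- ln_1. destruct (Req_dec (c / 2) 1) as [->|N]; [lra|].
      left; apply ln_increasing; lra. }
    right. split.
    + exists p. destruct Bp as [[Hpp Hp3] Hpu]. repeat split; auto; lra.
    + exists p, q. do 4 (split; [assumption|]). rewrite Dpq, Rabs_left1 by lra. ring.
Qed.

Lemma side_ok_ideal u v : gvertex 0 u -> gvertex 0 v ->
  side_ok 0 u 0 v <-> mink u v < 0.
Proof.
  simpl. intros [Hu Pu] [Hv Pv]. split.
  - intros [a [b [Ha [Hb [[Hx _] _]]]]].
    rewrite mink_linl, !mink_linr, Hu, Hv, (mink_sym v u) in Hx.
    destruct (Rlt_or_le (mink u v) 0) as [|Ge]; auto.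
    assert (0 <= a * b * mink u v) by (apply Rmult_le_pos; [apply Rmult_le_pos|]; lra). nra.
  - intro Hm.
    destruct (exists_sqrt (-2 * (0 + mink u v))) as [k [kp K]]; [lra|].
    assert (0 < / k) by (apply Rinv_0_lt_compat; lra).
    exists (/k), (/k). repeat split; try lra; auto.
    all: apply (bisector_H2 u v 0 k); auto.
Qed.

(** The side between two hyperideal vertices survives truncation iff their
    polars are ultraparallel, i.e. <u,v> < -1. *)
Lemma side_ok_hyperideal u v : gvertex (-1) u -> gvertex (-1) v ->
  side_ok (-1) u (-1) v <-> mink u v < -1.
Proof.
  simpl. intros [Hu Pu] [Hv Pv]. split.
  - intros [a [b [Ha [Hb [[Hx _] [Cu Cv]]]]]].
    apply Rnot_le_lt in Cu. apply Rnot_le_lt in Cv.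
    rewrite mink_linl, Hu, (mink_sym v u) in Cu.
    rewrite mink_linl, Hv in Cv.
    rewrite mink_linl, !mink_linr, Hu, Hv, (mink_sym v u) in Hx. nra.
  - intro Hm.
    destruct (exists_sqrt (-2 * (1 + mink u v))) as [k [kp K]]; [lra|].
    assert (0 < / k) by (apply Rinv_0_lt_compat; lra).
    exists (/k), (/k). repeat split; try lra.
    1, 2: apply (bisector_H2 u v 1 k); auto.
    all: simpl; rewrite mink_linl; rewrite ?Hu, ?Hv, ?(mink_sym v u); nra.
Qed.

Definition side_bound (eps : Z) : R := match eps with Z0 => 0 | _ => -1 end.

Definition side_length (eps : Z) (u v : V3) : R :=
  match eps with Z0 => ln (- mink u v / 2) | _ => arcosh (- mink u v) end.

Lemma side_ok_iff eps u v : (eps = 0%Z \/ eps = (-1)%Z) -> gvertex eps u -> gvertex eps v ->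
  side_ok eps u eps v <-> mink u v < side_bound eps.
Proof. intros [-> | ->]; [apply side_ok_ideal | apply side_ok_hyperideal]. Qed.

Lemma glen_side_length eps u v : (eps = 0%Z \/ eps = (-1)%Z) -> gvertex eps u -> gvertex eps v ->
  mink u v < side_bound eps -> glen eps u eps v (side_length eps u v).
Proof. intros [-> | ->]; [apply glen_ideal | apply glen_hyperideal]. Qed.

Lemma side_length_sym eps u v : side_length eps u v = side_length eps v u.
Proof. unfold side_length. now rewrite mink_sym. Qed.

Lemma side_ok_sym t1 v1 t2 v2 : side_ok t1 v1 t2 v2 -> side_ok t2 v2 t1 v1.
Proof.
  intros [a [b [Ha [Hb [H [C1 C2]]]]]]. exists b, a. rewrite (lin_comm b v2 a v1). tauto.
Qed.

Lemma gtri_swap12 e d v1 v2 v3 : gtri e e d v1 v2 v3 -> gtri e e d v2 v1 v3.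
Proof.
  intros [G1 [G2 [G3 [D [S12 [S23 S31]]]]]].
  repeat split; auto; try (apply side_ok_sym; assumption).
  replace (det3 v2 v1 v3) with (- det3 v1 v2 v3) by (unfold det3; ring). lra.
Qed.

Lemma setdist_sym A B d : setdist A B d -> setdist B A d.
Proof.
  assert (Flip : forall (P Q : V3 -> Prop) t,
    (exists x y, P x /\ Q y /\ t = hdist x y) -> exists x y, Q x /\ P y /\ t = hdist x y).
  { intros P Q t [x [y [Px [Qy ->]]]]. exists y, x. unfold hdist. rewrite mink_sym. auto. }
  intros [Low Great]. split.
  - intros t Ht. apply Low, Flip, Ht.
  - intros m' Hm. apply Great. intros t Ht. apply Hm, Flip, Ht.
Qed.

(** At an ideal vertex the horocyclic arc is traversed backwards: swap the
    endpoints and replace the unit tangent T by -T - s w. *)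
Lemma horo_angle_swap w u v th : gvertex 0 w -> gangle 0 w u v th -> gangle 0 w v u th.
Proof.
  simpl. intros [Hw Pw] [p [q [T [s [Bp [Gp [Bq [Gq [HTT [HTp [HTw [Hq Hth]]]]]]]]]]]].
  exists q, p, (lin (-1) T (-s) w), s.
  destruct Bp as [Hp Bp]. destruct Bq as [Hq' Bq].
  assert (HTq : mink T q = s) by (rewrite Hq, !mink_linr, HTp, HTT, HTw; ring).
  assert (Hwq : mink w q = mink w p) by (rewrite Hq, !mink_linr, Hw, (mink_sym w T), HTw; ring).
  split; [split; assumption|]. split; [exact Gq|].
  split; [split; assumption|]. split; [exact Gp|].
  split; [|split; [|split; [|split; [|exact Hth]]]].
  - rewrite mink_linl, !mink_linr, HTT, HTw, (mink_sym w T), HTw, Hw. ring.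
  - rewrite mink_linl, HTq, Hwq, (mink_sym w p). replace (mink p w) with (-1) by lra. ring.
  - rewrite mink_linl, HTw, Hw. ring.
  - rewrite Hq. destruct p, T, w. unfold lin; simpl. f_equal; field.
Qed.

Lemma gangle_swap d w u v th : gvertex d w -> gangle d w u v th -> gangle d w v u th.
Proof.
  destruct d; intro Gw.
  - now apply horo_angle_swap.
  - simpl. intros [Hth Hcos]. split; [exact Hth|].
    rewrite Hcos, Rmult_comm. f_equal. apply mink_sym.
  - apply setdist_sym.
Qed.

Lemma cosh_sq_sub_sinh_sq x : cosh x * cosh x - sinh x * sinh x = 1.
Proof. unfold cosh, sinh. rewrite exp_Ropp. field. apply Rgt_not_eq, exp_pos. Qed.

Lemma cosh_double x : cosh (x + x) = cosh x * cosh x + sinh x * sinh x.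
Proof.
  unfold cosh, sinh. rewrite !exp_Ropp, exp_plus. field. apply Rgt_not_eq, exp_pos.
Qed.

Lemma cosh_pos x : 0 < cosh x.
Proof. unfold cosh. pose proof (exp_pos x). pose proof (exp_pos (- x)). lra. Qed.

Lemma sinh_pos x : 0 < x -> 0 < sinh x.
Proof. intro Hx. rewrite <- sinh_0. now apply sinh_lt. Qed.

Lemma cosh_gt_1 x : 0 < x -> 1 < cosh x.
Proof.
  intro Hx. pose proof (cosh_sq_sub_sinh_sq x). pose proof (sinh_pos x Hx).
  pose proof (cosh_pos x). nra.
Qed.

Lemma ideal_vertices l1 l2 l3 : exists w1 w2 w3,
  gvertex 0 w1 /\ gvertex 0 w2 /\ gvertex 0 w3 /\ det3 w1 w2 w3 <> 0 /\
  mink w2 w3 = -2 * exp l1 /\ mink w3 w1 = -2 * exp l2 /\ mink w1 w2 = -2 * exp l3.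
Proof.
  set (a := exp ((l2 + l3 - l1) / 2)). set (b := exp ((l1 + l3 - l2) / 2)).
  set (c := exp ((l1 + l2 - l3) / 2)).
  assert (ap : 0 < a) by apply exp_pos. assert (bp : 0 < b) by apply exp_pos.
  assert (cp : 0 < c) by apply exp_pos.
  assert (bc : b * c = exp l1) by (unfold b, c; rewrite <- exp_plus; f_equal; field).
  assert (ca : c * a = exp l2) by (unfold a, c; rewrite <- exp_plus; f_equal; field).
  assert (ab : a * b = exp l3) by (unfold a, b; rewrite <- exp_plus; f_equal; field).
  exists (mkV a 0 a), (mkV (-b) 0 b), (mkV 0 (2 * c) (2 * c)).
  unfold gvertex, mink, det3; simpl.
  assert (0 < a * b * c) by (repeat apply Rmult_lt_0_compat; auto).
  repeat split; try lra; try nra.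
Qed.

Lemma hexagon_apex C3 S3 B C : 0 < C3 -> 0 < S3 -> C3 * C3 - S3 * S3 = 1 -> 0 < B -> 0 < C ->
  exists w, gvertex (-1) w /\ 0 < c2 w /\
    mink (mkV (-C3) 0 S3) w = - C /\ mink w (mkV C3 0 S3) = - B.
Proof.
  intros C3p S3p CS Bp Cp.
  assert (SC : S3 < C3) by nra.
  set (z := (B + C) / (2 * S3)). set (x := (C - B) / (2 * C3)).
  assert (Ez : z * (2 * S3) = B + C) by (unfold z; field; lra).
  assert (Ex : x * (2 * C3) = C - B) by (unfold x; field; lra).
  assert (zp : 0 < z) by nra.
  assert (xz : x * x <= z * z).
  { assert (Sq : (x * (2 * C3)) * (x * (2 * C3)) <= (z * (2 * C3)) * (z * (2 * C3))).
    { rewrite Ex. apply Rle_trans with ((z * (2 * S3)) * (z * (2 * S3))); [rewrite Ez; nra|].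
      apply Rmult_le_compat; nra. }
    nra. }
  destruct (exists_sqrt (1 + z * z - x * x)) as [y [yp Y]]; [lra|].
  exists (mkV x y z). unfold gvertex, mink; simpl. repeat split; nra.
Qed.

Lemma hyperideal_vertices l1 l2 l3 : 0 < l1 -> 0 < l2 -> 0 < l3 -> exists w1 w2 w3,
  gvertex (-1) w1 /\ gvertex (-1) w2 /\ gvertex (-1) w3 /\ det3 w1 w2 w3 <> 0 /\
  mink w2 w3 = - cosh l1 /\ mink w3 w1 = - cosh l2 /\ mink w1 w2 = - cosh l3.
Proof.
  intros H1 H2 H3.
  set (C3 := cosh (l3 / 2)). set (S3 := sinh (l3 / 2)).
  assert (CS : C3 * C3 - S3 * S3 = 1) by apply cosh_sq_sub_sinh_sq.
  assert (S3p : 0 < S3) by (apply sinh_pos; lra).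
  assert (C3p : 0 < C3) by apply cosh_pos.
  destruct (hexagon_apex C3 S3 (cosh l2) (cosh l1) C3p S3p CS (cosh_pos l2) (cosh_pos l1))
    as [w3 [G3 [Y3 [M23 M31]]]].
  exists (mkV C3 0 S3), (mkV (-C3) 0 S3), w3.
  assert (G : forall c, gvertex (-1) (mkV c 0 S3) <-> c * c - S3 * S3 = 1).
  { intro c. unfold gvertex, mink; simpl. split; [intros [E _]; lra | intro E; split; lra]. }
  split; [apply G; exact CS|]. split; [apply G; lra|]. split; [exact G3|].
  split; [|split; [exact M23|split]].
  - destruct w3 as [x y z]. unfold det3; simpl in *. intro E.
    assert (0 < C3 * S3 * y)
      by (apply Rmult_lt_0_compat; [apply Rmult_lt_0_compat|]; assumption).
    nra.
  - exact M31.
  - unfold mink; simpl. replace l3 with (l3 / 2 + l3 / 2) by field.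
    rewrite cosh_double. fold C3 S3. ring.
Qed.

Lemma gtri_of_products eps w1 w2 w3 : (eps = 0%Z \/ eps = (-1)%Z) ->
  gvertex eps w1 -> gvertex eps w2 -> gvertex eps w3 -> det3 w1 w2 w3 <> 0 ->
  mink w2 w3 < side_bound eps -> mink w3 w1 < side_bound eps -> mink w1 w2 < side_bound eps ->
  gtri eps eps eps w1 w2 w3 /\
  glen eps w2 eps w3 (side_length eps w2 w3) /\ glen eps w3 eps w1 (side_length eps w3 w1) /\
  glen eps w1 eps w2 (side_length eps w1 w2).
Proof.
  intros He G1 G2 G3 D M23 M31 M12.
  repeat split; auto; try (apply glen_side_length; assumption); apply side_ok_iff; assumption.
Qed.

Lemma triangle_of_lengths eps l1 l2 l3 : (eps = 0%Z \/ eps = (-1)%Z) ->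
  (eps = (-1)%Z -> 0 < l1 /\ 0 < l2 /\ 0 < l3) ->
  exists w1 w2 w3, gtri eps eps eps w1 w2 w3 /\
    glen eps w2 eps w3 l1 /\ glen eps w3 eps w1 l2 /\ glen eps w1 eps w2 l3.
Proof.
  intros He Pos. destruct He as [-> | ->].
  - destruct (ideal_vertices l1 l2 l3) as [w1 [w2 [w3 [G1 [G2 [G3 [D [M23 [M31 M12]]]]]]]]].
    assert (Len : forall u v l, mink u v = -2 * exp l -> side_length 0 u v = l).
    { intros u v l E. unfold side_length. rewrite E.
      replace (- (-2 * exp l) / 2) with (exp l) by field. apply ln_exp. }
    assert (Neg : forall l, -2 * exp l < side_bound 0)
      by (intro l; simpl; pose proof (exp_pos l); lra).
    exists w1, w2, w3.
    rewrite <- (Len w2 w3 l1), <- (Len w3 w1 l2), <- (Len w1 w2 l3) by assumption.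
    apply gtri_of_products; auto; [rewrite M23 | rewrite M31 | rewrite M12]; apply Neg.
  - destruct (Pos eq_refl) as [P1 [P2 P3]].
    destruct (hyperideal_vertices l1 l2 l3 P1 P2 P3)
      as [w1 [w2 [w3 [G1 [G2 [G3 [D [M23 [M31 M12]]]]]]]]].
    assert (Len : forall u v l, 0 < l -> mink u v = - cosh l -> side_length (-1) u v = l).
    { intros u v l Hl E. unfold side_length. rewrite E, Ropp_involutive, arcosh_cosh.
      apply Rabs_right. lra. }
    assert (Far : forall l, 0 < l -> - cosh l < side_bound (-1))
      by (intros l Hl; simpl; pose proof (cosh_gt_1 l Hl); lra).
    exists w1, w2, w3.
    rewrite <- (Len w2 w3 l1), <- (Len w3 w1 l2), <- (Len w1 w2 l3) by assumption.
    apply gtri_of_products; auto; [rewrite M23 | rewrite M31 | rewrite M12]; now apply Far.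
Qed.

Lemma realizes_Dset eps delta th a b l : J (eps * delta) a -> J (eps * delta) b ->
  realizes eps delta th a b l -> Dset eps delta th a b.
Proof.
  intros Ja Jb [v1 [v2 [v3 [G [A [B [T _]]]]]]].
  split; [exact Ja|]. split; [exact Jb|]. exists v1, v2, v3. auto.
Qed.

Lemma Dset_third_side eps delta th a b : (eps = 0%Z \/ eps = (-1)%Z) -> Dset eps delta th a b ->
  exists l, realizes eps delta th a b l /\ realizes eps delta th b a l /\ (eps = (-1)%Z -> 0 < l).
Proof.
  intros He [_ [_ [v1 [v2 [v3 [G [Ga [Gb T]]]]]]]].
  pose proof G as [G1 [G2 [G3 [_ [S12 _]]]]].
  apply (side_ok_iff eps v1 v2 He G1 G2) in S12.
  exists (side_length eps v1 v2). split; [|split].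
  - exists v1, v2, v3. repeat (split; [assumption|]). now apply glen_side_length.
  - exists v2, v1, v3. split; [now apply gtri_swap12|].
    split; [assumption|]. split; [assumption|]. split; [now apply gangle_swap|].
    rewrite side_length_sym. apply glen_side_length; auto. now rewrite mink_sym.
  - intros ->. apply arcosh_pos. simpl in S12. lra.
Qed.

Theorem lemma4p1 (eps delta : Z) (phi1 phi2 phi3 : R) :
  (eps = 0%Z \/ eps = (-1)%Z) ->
  (delta = (-1)%Z \/ delta = 0%Z \/ delta = 1%Z) ->
  Iint delta phi1 -> Iint delta phi2 -> Iint delta phi3 ->
  forall r1 r2 r3 : R,
    Mset eps delta phi1 phi2 phi3 r1 r2 r3 <->
    (J (eps * delta) r1 /\ J (eps * delta) r2 /\ J (eps * delta) r3 /\
     Dset eps delta phi1 r2 r3 /\ Dset eps delta phi1 r3 r2 /\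
     Dset eps delta phi2 r3 r1 /\ Dset eps delta phi2 r1 r3 /\
     Dset eps delta phi3 r1 r2 /\ Dset eps delta phi3 r2 r1).
Proof.
  intros He _ _ _ _ r1 r2 r3. split.
  - intros [J1 [J2 [J3 [l1 [l2 [l3 [R1 [R1' [R2 [R2' [R3 [R3' _]]]]]]]]]]]].
    repeat split; auto; eapply realizes_Dset; eauto.
  - intros [J1 [J2 [J3 [D1 [_ [D2 [_ [D3 _]]]]]]]].
    destruct (Dset_third_side _ _ _ _ _ He D1) as [l1 [R1 [R1' P1]]].
    destruct (Dset_third_side _ _ _ _ _ He D2) as [l2 [R2 [R2' P2]]].
    destruct (Dset_third_side _ _ _ _ _ He D3) as [l3 [R3 [R3' P3]]].
    repeat (split; [assumption|]).
    exists l1, l2, l3. repeat (split; [assumption|]).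
    apply triangle_of_lengths; [exact He|].
    intro Hm. repeat split; auto.
Qed.
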